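(* Let $\mathbf a:\mathbb R^D\to\mathcal H$ define a CMF dictionary with kernel $\kappa$, $D\ge1$. Let $\mathcal S^\star=\{\theta^\star_1,\theta^\star_2\}$ with $\theta^\star_1\ne\theta^\star_2$, let $\mathbf G\in\mathbb R^{2\times2}$, $\mathbf G[\ell,\ell']=\kappa(\theta^\star_\ell,\theta^\star_{\ell'})$, and $\mathbf g_\theta\in\mathbb R^2$, $\mathbf g_\theta[\ell]=\kappa(\theta,\theta^\star_\ell)$. If $\|\mathbf G^{-1}\mathbf g_\theta\|_1<1$ for every $\theta\in\mathrm{Cart}(\mathcal S^\star)\setminus\mathcal S^\star$, then OMP achieves exact $2$-step recovery of $\mathcal S^\star$.
   Context: CMF: $\varphi:[0,\infty)\to\mathbb R$ infinitely differentiable on $(0,\infty)$, right-continuous at $0$, $(-1)^n\varphi^{(n)}(x)\ge0$ for $x>0$, $n\ge0$. A CMF dictionary in dimension $D$ is $\mathbf a:\mathbb R^D\to\mathcal H$ ($\mathcal H$ real Hilbert) with $\kappa(\theta,\theta')=\langle\mathbf a(\theta),\mathbf a(\theta')\rangle=\varphi(\|\theta-\theta'\|_p^p)$, $\varphi$ a CMF, $\varphi(0)=1$, $\lim_{x\to\infty}\varphi(x)=0$, $0<p\le1$. $\mathrm{Cart}(\mathcal S)=\prod_{d=1}^D\{\theta[d]:\theta\in\mathcal S\}$. OMP with input $\mathbf y$: $\mathbf r=\mathbf y$, $\widehat{\mathcal S}=\emptyset$; while $\mathbf r\ne0$: choose any $\widehat\theta_t\in\arg\max_\theta|\langle\mathbf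 a(\theta),\mathbf r\rangle|$, add it to $\widehat{\mathcal S}$, set $\mathbf r$ to $\mathbf y$ minus its orthogonal projection onto $\mathrm{span}\{\mathbf a(\widehat\theta_1),\dots,\mathbf a(\widehat\theta_t)\}$. A reachable support is any final $\widehat{\mathcal S}$ obtainable through some choices of maximizers. Exact $2$-step recovery of $\mathcal S^\star$: for all nonzero $c_1,c_2$, every reachable support of OMP with input $c_1\mathbf a(\theta^\star_1)+c_2\mathbf a(\theta^\star_2)$ equals $\mathcal S^\star$. *)

From Stdlib Require Vectors.Fin.
From Stdlib Require Import Reals Lra List.
Open Scope R_scope.

Record RHilbert := {
  hcar :> Type;
  hzero : hcar;
  hadd : hcar -> hcar -> hcar;
  hopp : hcar -> hcar;
  hscal : R -> hcar -> hcar;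
  hinner : hcar -> hcar -> R;
  haddA : forall u v w, hadd u (hadd v w) = hadd (hadd u v) w;
  haddC : forall u v, hadd u v = hadd v u;
  hadd0 : forall u, hadd u hzero = u;
  haddN : forall u, hadd u (hopp u) = hzero;
  hscalA : forall a b u, hscal a (hscal b u) = hscal (a * b) u;
  hscal1 : forall u, hscal 1 u = u;
  hscalDr : forall a u v, hscal a (hadd u v) = hadd (hscal a u) (hscal a v);
  hscalDl : forall a b u, hscal (a + b) u = hadd (hscal a u) (hscal b u);
  hinner_sym : forall u v, hinner u v = hinner v u;
  hinner_addl : forall u v w, hinner (hadd u v) w = hinner u w + hinner v w;
  hinner_scall : forall a u v, hinner (hscal a u) v = a * hinner u v;
  hinner_pos : forall u, 0 <= hinner u u;
  hinner_def : forall u, hinner u u = 0 -> u = hzero;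
  hcomplete : forall s : nat -> hcar,
    (forall eps, eps > 0 -> exists N, forall m n, (N <= m)%nat -> (N <= n)%nat ->
        sqrt (hinner (hadd (s m) (hopp (s n))) (hadd (s m) (hopp (s n)))) < eps) ->
    exists l, forall eps, eps > 0 -> exists N, forall n, (N <= n)%nat ->
        sqrt (hinner (hadd (s n) (hopp l)) (hadd (s n) (hopp l))) < eps
}.

Arguments hzero {_}. Arguments hadd {_}. Arguments hopp {_}.
Arguments hscal {_}. Arguments hinner {_}.

Definition hsub {H : RHilbert} (u v : H) : H := hadd u (hopp v).

Definition CMF (phi : R -> R) : Prop :=
  (forall eps, eps > 0 -> exists delta, delta > 0 /\
      forall x, 0 <= x < delta -> Rabs (phi x - phi 0) < eps) /\
  (* phi is C^oo on (0,oo), with derivatives d n, and (-1)^n d n >= 0 there *)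
  exists d : nat -> R -> R,
    (forall x, 0 <= x -> d 0%nat x = phi x) /\
    (forall n x, 0 < x -> derivable_pt_lim (d n) x (d (S n) x)) /\
    (forall n x, 0 < x -> 0 <= (-1) ^ n * d n x).

Definition vecR (D : nat) := Fin.t D -> R.

Fixpoint fsum (n : nat) : (Fin.t n -> R) -> R :=
  match n with
  | O => fun _ => 0
  | S m => fun f => f Fin.F1 + fsum m (fun i => f (Fin.FS i))
  end.

(* |x|^p, with the convention 0^p = 0 (p > 0) *)
Definition abspow (x p : R) : R :=
  if Req_EM_T x 0 then 0 else Rpower (Rabs x) p.

Definition lpp {D : nat} (p : R) (t t' : vecR D) : R :=
  fsum D (fun i => abspow (t i - t' i) p).

Definition kernel {D : nat} (phi : R -> R) (p : R) (t t' : vecR D) : R :=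
  phi (lpp p t t').

Definition CMF_dictionary {D : nat} {H : RHilbert} (a : vecR D -> H)
    (phi : R -> R) (p : R) : Prop :=
  CMF phi /\ phi 0 = 1 /\
  (forall eps, eps > 0 -> exists M, forall x, x > M -> Rabs (phi x) < eps) /\
  0 < p <= 1 /\
  forall t t', hinner (a t) (a t') = kernel phi p t t'.

(** Cartesian product of a two-point set *)
Definition in_Cart2 {D : nat} (t1 t2 t : vecR D) : Prop :=
  forall i, t i = t1 i \/ t i = t2 i.

Definition mat2 := ((R * R) * (R * R))%type.  (* ((m11,m12),(m21,m22)) *)
Definition det2 (m : mat2) : R :=
  let '((a, b), (c, d)) := m in a * d - b * c.
Definition inv2 (m : mat2) : mat2 :=
  let '((a, b), (c, d)) := m in
  ((d / det2 m, - b / det2 m), (- c / det2 m, a / det2 m)).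
Definition mulv2 (m : mat2) (v : R * R) : R * R :=
  let '((a, b), (c, d)) := m in let '(x, y) := v in (a * x + b * y, c * x + d * y).
Definition norm1_2 (v : R * R) : R := Rabs (fst v) + Rabs (snd v).

Inductive in_span {H : RHilbert} : list H -> H -> Prop :=
  | span_nil : in_span nil hzero
  | span_cons : forall L v x c, in_span L v -> in_span (x :: L) (hadd v (hscal c x)).

(* r = y minus the orthogonal projection of y onto span L *)
Definition is_residual {H : RHilbert} (y : H) (L : list H) (r : H) : Prop :=
  (exists v, in_span L v /\ r = hsub y v) /\
  (forall x, In x L -> hinner x r = 0).

Definition is_argmax {D : nat} {H : RHilbert} (a : vecR D -> H) (r : H)
    (t : vecR D) : Prop :=
  forall t', Rabs (hinner (a t') r) <= Rabs (hinner (a t) r).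

(* omp_path a y L : the list L of selected parameters (in order) is obtainable
   by some execution of OMP on input y *)
Inductive omp_path {D : nat} {H : RHilbert} (a : vecR D -> H) (y : H)
    : list (vecR D) -> Prop :=
  | omp_nil : omp_path a y nil
  | omp_step : forall L r t,
      omp_path a y L -> is_residual y (map a L) r -> r <> hzero ->
      is_argmax a r t -> omp_path a y (L ++ t :: nil).

(* A reachable (final) support: an execution that terminated (residual 0) *)
Definition reachable_support {D : nat} {H : RHilbert} (a : vecR D -> H) (y : H)
    (L : list (vecR D)) : Prop :=
  omp_path a y L /\ is_residual y (map a L) hzero.

Definition exact_2step_recovery {D : nat} {H : RHilbert} (a : vecR D -> H)
    (t1 t2 : vecR D) : Prop :=
  forall c1 c2 : R, c1 <> 0 -> c2 <> 0 ->
    forall L, reachable_support a (hadd (hscal c1 (a t1)) (hscal c2 (a t2))) L ->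
      forall t, In t L <-> (t = t1 \/ t = t2).

From Stdlib Require Import Reals List Lra FunctionalExtensionality Classical.
Open Scope R_scope.

(* Write g = kappa(t1, t2) and, for a parameter t, x = kappa(t, t1), y = kappa(t, t2).
   For the Gram matrix G = [[1, g], [g, 1]] the exact recovery condition (ERC)
   ||G^{-1} (x, y)||_1 < 1 is equivalent to |x + y| < 1 + g and |x - y| < 1 - g (erc2_iff).

   Of complete monotonicity we only use that phi is nonnegative,
   nonincreasing and convex, strictly so where it is positive (section CompletelyMonotone).
   The difference bound holds at every t off the support, by strict superadditivity of
   1 - phi and the triangle inequality for ||.||_p^p, p <= 1 (corr_diff_bound).  The sum
   bound, assumed on the grid Cart({t1, t2}), spreads to every t by induction on the number
   of off-grid coordinates: in a single coordinate an off-grid value does strictly worse than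
   the better of the two grid values, by concavity of s |-> |s|^p and convexity of phi
   (coord_bound).  Hence the ERC holds at every atom off the support (erc_off_support).

   Under the ERC, Hoelder's inequality shows that a nonzero residual in
   span{a t1, a t2} is strictly better correlated with a support atom than with any other
   atom, so OMP only selects t1 or t2; as |g| < 1 it cannot stop before both are selected
   (omp_two_sparse_recovery). *)

Lemma ratio_in_unit a b : 0 < a < b -> 0 < a / b < 1.
Proof.
  intros Hab. split; [apply Rdiv_lt_0_compat; lra|].
  apply (Rmult_lt_reg_r b); [lra|]. unfold Rdiv. rewrite Rmult_assoc, Rinv_l; lra.
Qed.

Lemma abspow_0 p : abspow 0 p = 0.
Proof. unfold abspow. destruct (Req_EM_T 0 0); [reflexivity | contradiction]. Qed.

Lemma abspow_nz x p : x <> 0 -> abspow x p = Rpower (Rabs x) p.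
Proof. intros Hx. unfold abspow. destruct (Req_EM_T x 0); [contradiction | reflexivity]. Qed.

Lemma abspow_pos x p : x <> 0 -> 0 < abspow x p.
Proof. intros Hx. rewrite abspow_nz by exact Hx. apply exp_pos. Qed.

Lemma abspow_nonneg x p : 0 <= abspow x p.
Proof.
  destruct (Req_dec x 0) as [->|Hx]; [rewrite abspow_0; lra | left; apply abspow_pos, Hx].
Qed.

Lemma abspow_abs x p : abspow (Rabs x) p = abspow x p.
Proof.
  destruct (Req_dec x 0) as [->|Hx]; [rewrite Rabs_R0; reflexivity|].
  assert (Rabs x <> 0) by (apply Rabs_no_R0, Hx).
  rewrite !abspow_nz, Rabs_Rabsolu by assumption. reflexivity.
Qed.

Lemma abspow_opp x p : abspow (- x) p = abspow x p.
Proof. rewrite <- abspow_abs, Rabs_Ropp, abspow_abs. reflexivity. Qed.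

Lemma abspow_sym x y p : abspow (x - y) p = abspow (y - x) p.
Proof. rewrite <- abspow_opp. f_equal. ring. Qed.

Lemma abspow_lt x y p : 0 < p -> Rabs x < Rabs y -> abspow x p < abspow y p.
Proof.
  intros Hp Hxy.
  assert (Hy : y <> 0) by (intros ->; rewrite Rabs_R0 in Hxy; pose proof (Rabs_pos x); lra).
  destruct (Req_dec x 0) as [->|Hx]; [rewrite abspow_0; apply abspow_pos, Hy|].
  rewrite !abspow_nz by assumption.
  apply Rlt_Rpower_l; [exact Hp | split; [apply Rabs_pos_lt, Hx | exact Hxy]].
Qed.

Lemma abspow_le x y p : 0 < p -> Rabs x <= Rabs y -> abspow x p <= abspow y p.
Proof.
  intros Hp [Hlt|Heq]; [left; apply abspow_lt; assumption|].
  rewrite <- (abspow_abs x), <- (abspow_abs y), Heq. lra.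
Qed.

Lemma rpower_ge_base s p : 0 < p <= 1 -> 0 < s <= 1 -> s <= Rpower s p.
Proof.
  intros Hp Hs. unfold Rpower. rewrite <- (exp_ln s) at 1 by lra.
  assert (Hln : ln s <= 0).
  { destruct (Req_dec s 1) as [->|Hne]; [rewrite ln_1; lra|].
    rewrite <- ln_1. left. apply ln_increasing; lra. }
  assert (Hle : ln s <= p * ln s) by nra.
  destruct Hle as [Hlt|Heq]; [left; apply exp_increasing, Hlt | rewrite <- Heq; lra].
Qed.

Lemma abspow_scale s y p : 0 < p <= 1 -> 0 < s <= 1 -> s * abspow y p <= abspow (s * y) p.
Proof.
  intros Hp Hs. destruct (Req_dec y 0) as [->|Hy]; [rewrite Rmult_0_r, abspow_0; lra|].
  assert (Hsy : s * y <> 0) by (intros Z; apply Rmult_integral in Z; lra).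
  rewrite !abspow_nz, Rabs_mult, (Rabs_pos_eq s) by (assumption || lra).
  rewrite <- Rpower_mult_distr by (lra || apply Rabs_pos_lt, Hy).
  apply Rmult_le_compat_r; [left; apply exp_pos | apply rpower_ge_base; assumption].
Qed.

Lemma abspow_subadd x y p : 0 < p <= 1 -> abspow (x + y) p <= abspow x p + abspow y p.
Proof.
  intros Hp.
  destruct (Req_dec x 0) as [->|Hx]; [rewrite Rplus_0_l, abspow_0; lra|].
  destruct (Req_dec y 0) as [->|Hy]; [rewrite Rplus_0_r, abspow_0; lra|].
  pose proof (Rabs_pos_lt x Hx). pose proof (Rabs_pos_lt y Hy).
  set (S := Rabs x + Rabs y).
  assert (Hsum : abspow (x + y) p <= abspow S p).
  { apply abspow_le; [lra|]. unfold S. rewrite (Rabs_pos_eq (Rabs x + Rabs y)) by lra. apply Rabs_triang. }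
  assert (Hpart : forall z, 0 < Rabs z -> Rabs z < S -> Rabs z / S * abspow S p <= abspow z p).
  { intros z Hz HzS. rewrite <- (abspow_abs z).
    replace (Rabs z) with (Rabs z / S * S) at 2 by (field; unfold S; lra).
    pose proof (ratio_in_unit (Rabs z) S). apply abspow_scale; lra. }
  pose proof (Hpart x ltac:(lra) ltac:(unfold S; lra)).
  pose proof (Hpart y ltac:(lra) ltac:(unfold S; lra)).
  assert (Hone : Rabs x / S + Rabs y / S = 1) by (unfold S; field; lra).
  assert (abspow S p = Rabs x / S * abspow S p + Rabs y / S * abspow S p)
    by (rewrite <- Rmult_plus_distr_r, Hone; ring).
  lra.
Qed.

Lemma fsum_ext n (f g : Fin.t n -> R) : (forall i, f i = g i) -> fsum n f = fsum n g.
Proof.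
  revert f g; induction n as [|n IH]; intros f g Hfg; simpl; [reflexivity|].
  rewrite Hfg, (IH _ (fun i => g (Fin.FS i))) by (intros; apply Hfg). reflexivity.
Qed.

Lemma fsum_plus n (f g : Fin.t n -> R) : fsum n (fun i => f i + g i) = fsum n f + fsum n g.
Proof. revert f g; induction n as [|n IH]; intros f g; simpl; [lra | rewrite IH; ring]. Qed.

Lemma fsum_le n (f g : Fin.t n -> R) : (forall i, f i <= g i) -> fsum n f <= fsum n g.
Proof.
  revert f g; induction n as [|n IH]; intros f g Hfg; simpl; [lra|].
  pose proof (Hfg Fin.F1). pose proof (IH (fun i => f (Fin.FS i)) (fun i => g (Fin.FS i))
    (fun i => Hfg (Fin.FS i))). lra.
Qed.

Lemma fsum_const n c : fsum n (fun _ => c) = INR n * c.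
Proof. induction n as [|n IH]; simpl fsum; [simpl; ring | rewrite IH, S_INR; ring]. Qed.

Lemma fsum_nonneg n (f : Fin.t n -> R) : (forall i, 0 <= f i) -> 0 <= fsum n f.
Proof.
  intros Hf. replace 0 with (fsum n (fun _ => 0)) by (rewrite fsum_const; ring).
  apply fsum_le, Hf.
Qed.

Lemma fsum_pos n (f : Fin.t n -> R) i : (forall j, 0 <= f j) -> 0 < f i -> 0 < fsum n f.
Proof.
  revert f i; induction n as [|n IH]; intros f i Hf Hi; [inversion i|]. simpl.
  revert Hi. pattern i; apply Fin.caseS'.
  - intros. pose proof (fsum_nonneg n (fun j => f (Fin.FS j)) (fun j => Hf _)). lra.
  - intros j Hj. pose proof (IH (fun j => f (Fin.FS j)) j (fun j => Hf _) Hj).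
    pose proof (Hf Fin.F1). lra.
Qed.

Lemma fsum_upd n (f g : Fin.t n -> R) i : (forall j, j <> i -> f j = g j) ->
  fsum n f - f i = fsum n g - g i.
Proof.
  revert f g i; induction n as [|n IH]; intros f g i Hfg; [inversion i|]. simpl.
  revert Hfg. pattern i; apply Fin.caseS'.
  - intros Hfg. rewrite (fsum_ext _ _ (fun j => g (Fin.FS j)))
      by (intros j; apply Hfg; intros Z; inversion Z). ring.
  - intros j Hfg.
    assert (f Fin.F1 = g Fin.F1) by (apply Hfg; intros Z; inversion Z).
    assert (fsum n (fun k => f (Fin.FS k)) - f (Fin.FS j) = fsum n (fun k => g (Fin.FS k)) - g (Fin.FS j)).
    { apply (IH (fun k => f (Fin.FS k)) (fun k => g (Fin.FS k))).
      intros k Hk. apply Hfg. intros Z. apply Hk, Fin.FS_inj, Z. }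
    lra.
Qed.
Definition upd {D : nat} (th : vecR D) (i : Fin.t D) (v : R) : vecR D :=
  fun j => if Fin.eq_dec j i then v else th j.

Lemma upd_same {D : nat} (th : vecR D) i v : upd th i v i = v.
Proof. unfold upd. destruct (Fin.eq_dec i i); [reflexivity | contradiction]. Qed.

Lemma upd_other {D : nat} (th : vecR D) i j v : j <> i -> upd th i v j = th j.
Proof. intros Hji. unfold upd. destruct (Fin.eq_dec j i); [contradiction | reflexivity]. Qed.

Lemma lpp_self {D : nat} p (t : vecR D) : lpp p t t = 0.
Proof.
  unfold lpp. rewrite (fsum_ext _ _ (fun _ => 0)), fsum_const; [ring|].
  intros i. rewrite Rminus_diag. apply abspow_0.
Qed.

Lemma lpp_sym {D : nat} p (t t' : vecR D) : lpp p t t' = lpp p t' t.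
Proof. apply fsum_ext. intros i. apply abspow_sym. Qed.

Lemma lpp_nonneg {D : nat} p (t t' : vecR D) : 0 <= lpp p t t'.
Proof. apply fsum_nonneg. intros i. apply abspow_nonneg. Qed.

Lemma lpp_pos {D : nat} p (t t' : vecR D) : t <> t' -> 0 < lpp p t t'.
Proof.
  intros Hne. destruct (classic (exists i, t i <> t' i)) as [[i Hi]|Hall].
  - apply (fsum_pos _ _ i); [intros; apply abspow_nonneg | apply abspow_pos; lra].
  - exfalso. apply Hne, functional_extensionality. intros i.
    apply NNPP. intros Hi. apply Hall. exists i. exact Hi.
Qed.

Lemma lpp_triangle {D : nat} p (u v w : vecR D) : 0 < p <= 1 ->
  lpp p u w <= lpp p u v + lpp p v w.
Proof.
  intros Hp. unfold lpp. rewrite <- fsum_plus. apply fsum_le. intros i.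
  replace (u i - w i) with ((u i - v i) + (v i - w i)) by ring. apply abspow_subadd, Hp.
Qed.

Lemma lpp_upd_self {D : nat} p (th t : vecR D) i : lpp p (upd th i (th i)) t = lpp p th t.
Proof.
  apply fsum_ext. intros j. unfold upd. destruct (Fin.eq_dec j i) as [->|]; reflexivity.
Qed.

Lemma lpp_upd {D : nat} p (th t : vecR D) i v :
  lpp p (upd th i v) t = lpp p (upd th i (t i)) t + abspow (v - t i) p.
Proof.
  pose proof (fsum_upd D (fun j => abspow (upd th i v j - t j) p)
                         (fun j => abspow (upd th i (t i) j - t j) p) i) as E.
  cbv beta in E. rewrite !upd_same, Rminus_diag, abspow_0 in E.
  unfold lpp. enough (Hagree : forall j, j <> i ->
    abspow (upd th i v j - t j) p = abspow (upd th i (t i) j - t j) p) by (specialize (E Hagree); lra).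
  intros j Hj. rewrite !upd_other by exact Hj. reflexivity.
Qed.

Definition off_grid (x a b : R) : R :=
  if Req_EM_T x a then 0 else if Req_EM_T x b then 0 else 1.

Definition grid_defect {D : nat} (t1 t2 th : vecR D) : R :=
  fsum D (fun i => off_grid (th i) (t1 i) (t2 i)).

Lemma off_grid_range x a b : 0 <= off_grid x a b <= 1.
Proof. unfold off_grid. destruct (Req_EM_T x a); [|destruct (Req_EM_T x b)]; lra. Qed.

Lemma off_grid_on x a b : x = a \/ x = b -> off_grid x a b = 0.
Proof.
  intros Hx. unfold off_grid.
  destruct (Req_EM_T x a); [|destruct (Req_EM_T x b)]; [reflexivity | reflexivity | tauto].
Qed.

Lemma off_grid_off x a b : x <> a -> x <> b -> off_grid x a b = 1.
Proof.
  intros Ha Hb. unfold off_grid.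
  destruct (Req_EM_T x a); [contradiction | destruct (Req_EM_T x b); [contradiction | reflexivity]].
Qed.

(* The defect is at most the dimension; this bounds the length of the induction. *)
Lemma grid_defect_bound {D : nat} (t1 t2 th : vecR D) : grid_defect t1 t2 th <= INR D.
Proof.
  unfold grid_defect. rewrite <- (Rmult_1_r (INR D)), <- fsum_const.
  apply fsum_le. intros i. apply off_grid_range.
Qed.

Lemma grid_defect_pos {D : nat} (t1 t2 th : vecR D) i :
  th i <> t1 i -> th i <> t2 i -> 0 < grid_defect t1 t2 th.
Proof.
  intros H1 H2. apply (fsum_pos _ _ i); [intros; apply off_grid_range|].
  rewrite off_grid_off by assumption. lra.
Qed.

Lemma grid_defect_upd {D : nat} (t1 t2 th : vecR D) i v :
  th i <> t1 i -> th i <> t2 i -> v = t1 i \/ v = t2 i ->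
  grid_defect t1 t2 (upd th i v) = grid_defect t1 t2 th - 1.
Proof.
  intros H1 H2 Hv.
  pose proof (fsum_upd D (fun j => off_grid (upd th i v j) (t1 j) (t2 j))
                         (fun j => off_grid (th j) (t1 j) (t2 j)) i) as E.
  cbv beta in E. rewrite upd_same, off_grid_on, off_grid_off in E by assumption.
  unfold grid_defect. enough (Hagree : forall j, j <> i ->
    off_grid (upd th i v j) (t1 j) (t2 j) = off_grid (th j) (t1 j) (t2 j)) by (specialize (E Hagree); lra).
  intros j Hj. rewrite upd_other by exact Hj. reflexivity.
Qed.

Lemma cart_or_off_grid {D : nat} (t1 t2 th : vecR D) :
  in_Cart2 t1 t2 th \/ exists i, th i <> t1 i /\ th i <> t2 i.
Proof.
  destruct (classic (in_Cart2 t1 t2 th)) as [Hc|Hc]; [left; exact Hc | right].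
  apply not_all_ex_not in Hc. destruct Hc as [i Hi]. exists i. tauto.
Qed.
Definition gram2 (g : R) : mat2 := ((1, g), (g, 1)).

Definition erc2 (g x y : R) : Prop := norm1_2 (mulv2 (inv2 (gram2 g)) (x, y)) < 1.

Lemma erc2_unfold g x y : -1 < g < 1 ->
  (erc2 g x y <-> Rabs ((x - g * y) / (1 - g * g)) + Rabs ((y - g * x) / (1 - g * g)) < 1).
Proof.
  intros Hg. unfold erc2, norm1_2, mulv2, inv2, det2, gram2. simpl.
  replace (1 / (1 * 1 - g * g) * x + - g / (1 * 1 - g * g) * y)
    with ((x - g * y) / (1 - g * g)) by (field; nra).
  replace (- g / (1 * 1 - g * g) * x + 1 / (1 * 1 - g * g) * y)
    with ((y - g * x) / (1 - g * g)) by (field; nra).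
  reflexivity.
Qed.

(* |u| + |v| = max(|u + v|, |u - v|). *)
Lemma abs_sum_lt_iff u v : Rabs u + Rabs v < 1 <-> Rabs (u + v) < 1 /\ Rabs (u - v) < 1.
Proof.
  unfold Rabs. destruct (Rcase_abs u), (Rcase_abs v), (Rcase_abs (u + v)), (Rcase_abs (u - v));
    split; intros; lra.
Qed.

Lemma abs_div_lt_iff z c : 0 < c -> (Rabs (z / c) < 1 <-> Rabs z < c).
Proof.
  intros Hc. unfold Rdiv. rewrite Rabs_mult, Rabs_inv, (Rabs_pos_eq c) by lra.
  split; intros H.
  - apply (Rmult_lt_reg_r (/ c)); [apply Rinv_0_lt_compat, Hc|]. rewrite Rinv_r; lra.
  - apply (Rmult_lt_reg_r c); [exact Hc|]. rewrite Rmult_assoc, Rinv_l; lra.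
Qed.

Lemma erc2_iff g x y : -1 < g < 1 ->
  (erc2 g x y <-> Rabs (x + y) < 1 + g /\ Rabs (x - y) < 1 - g).
Proof.
  intros Hg. rewrite erc2_unfold, abs_sum_lt_iff by exact Hg.
  replace ((x - g * y) / (1 - g * g) + (y - g * x) / (1 - g * g)) with ((x + y) / (1 + g))
    by (field; nra).
  replace ((x - g * y) / (1 - g * g) - (y - g * x) / (1 - g * g)) with ((x - y) / (1 - g))
    by (field; nra).
  rewrite !abs_div_lt_iff by lra. reflexivity.
Qed.

(* Under the ERC the correlation of any combination al*a1 + be*a2 with the third atom is
   a combination, with l1-small weights, of its correlations al + be g and al g + be with
   a1 and a2: these weights are the entries of G^{-1} (x, y). *)
Lemma erc2_weights g x y : -1 < g < 1 -> erc2 g x y ->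
  exists u v, Rabs u + Rabs v < 1 /\
    forall al be, al * x + be * y = u * (al + be * g) + v * (al * g + be).
Proof.
  intros Hg Herc. apply erc2_unfold in Herc; [|exact Hg].
  exists ((x - g * y) / (1 - g * g)), ((y - g * x) / (1 - g * g)). split; [exact Herc|].
  intros al be. field. nra.
Qed.

(* Hoelder: a combination with l1 weights < 1 cannot dominate both of its entries
   unless they vanish. *)
Lemma hoelder_dominance u v c1 c2 : Rabs u + Rabs v < 1 ->
  Rabs c1 <= Rabs (u * c1 + v * c2) -> Rabs c2 <= Rabs (u * c1 + v * c2) -> c1 = 0 /\ c2 = 0.
Proof.
  intros Huv H1 H2. set (m := Rabs (u * c1 + v * c2)) in *.
  assert (Hm : m <= Rabs u * Rabs c1 + Rabs v * Rabs c2)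
    by (unfold m; rewrite <- !Rabs_mult; apply Rabs_triang).
  pose proof (Rabs_pos u). pose proof (Rabs_pos v). pose proof (Rabs_pos c1). pose proof (Rabs_pos c2).
  assert (Hm0 : m = 0).
  { assert (m <= (Rabs u + Rabs v) * m) by nra. pose proof (Rabs_pos (u * c1 + v * c2)). nra. }
  split; [destruct (Req_dec c1 0) as [|Hc] | destruct (Req_dec c2 0) as [|Hc]];
    try assumption; pose proof (Rabs_pos_lt _ Hc); lra.
Qed.

Definition below (u v : R) : Prop := u <= v /\ (0 < u -> u < v).

Lemma below_add u1 u2 v1 v2 : 0 <= u1 -> 0 <= u2 -> below u1 v1 -> below u2 v2 ->
  below (u1 + u2) (v1 + v2).
Proof.
  intros H1 H2 [L1 S1] [L2 S2]. split; [lra|]. intros Hpos.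
  destruct (Rle_lt_dec u1 0) as [Z|P]; [specialize (S2 ltac:(lra)) | specialize (S1 P)]; lra.
Qed.

Lemma below_lt u v B : below u v -> v <= B -> 0 < B -> u < B.
Proof. intros [L S] HvB HB. destruct (Rle_lt_dec u 0) as [Z|P]; [lra | specialize (S P); lra]. Qed.

Section CompletelyMonotone.

Variables (phi : R -> R) (d : nat -> R -> R).
Hypothesis phi_right_cont : forall eps, eps > 0 -> exists delta, delta > 0 /\
  forall x, 0 <= x < delta -> Rabs (phi x - phi 0) < eps.
Hypothesis d_phi : forall x, 0 <= x -> d 0%nat x = phi x.
Hypothesis d_deriv : forall n x, 0 < x -> derivable_pt_lim (d n) x (d (S n) x).
Hypothesis d_sign : forall n x, 0 < x -> 0 <= (-1) ^ n * d n x.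
Hypothesis phi_0 : phi 0 = 1.
Hypothesis phi_vanish : forall eps, eps > 0 -> exists M, forall x, x > M -> Rabs (phi x) < eps.

(* (-1)^n d_n is nonincreasing on (0,oo), its derivative being -(-1)^(n+1) d_(n+1) <= 0. *)
Lemma alt_deriv_antitone n u v : 0 < u <= v -> (-1) ^ n * d n v <= (-1) ^ n * d n u.
Proof.
  intros Huv. destruct (Req_dec u v) as [<-|Hne]; [lra|].
  destruct (MVT_cor2 (d n) (d (S n)) u v) as [c [Hmvt Hc]];
    [lra | intros c Hc; apply d_deriv; lra |].
  pose proof (Rmult_le_pos _ (v - u) (d_sign (S n) c ltac:(lra)) ltac:(lra)) as Hpos.
  simpl in Hpos. nra.
Qed.

Lemma d1_nonpos x : 0 < x -> d 1 x <= 0.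
Proof. intros Hx. pose proof (d_sign 1 x Hx). simpl in *. lra. Qed.

Lemma d1_monotone u v : 0 < u <= v -> d 1 u <= d 1 v.
Proof. intros Huv. pose proof (alt_deriv_antitone 1 u v Huv). simpl in *. lra. Qed.

Lemma d2_nonneg x : 0 < x -> 0 <= d 2 x.
Proof. intros Hx. pose proof (d_sign 2 x Hx). simpl in *. lra. Qed.

Lemma d2_antitone u v : 0 < u <= v -> d 2 v <= d 2 u.
Proof. intros Huv. pose proof (alt_deriv_antitone 2 u v Huv). simpl in *. lra. Qed.

Lemma phi_nonneg x : 0 <= x -> 0 <= phi x.
Proof.
  intros Hx. destruct (Req_dec x 0) as [->|Hne]; [lra|].
  rewrite <- d_phi by lra. pose proof (d_sign 0 x ltac:(lra)). simpl in *. lra.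
Qed.

(* Mean value theorem for phi on [u,v] with u >= 0; at 0 only right-continuity is known,
   so we apply the general MVT to the even extension x |-> phi |x|. *)
Lemma mvt_phi u v : 0 <= u < v -> exists c, u < c < v /\ phi v - phi u = d 1 c * (v - u).
Proof.
  intros Huv. set (psi x := phi (Rabs x)).
  assert (Hpsi : forall x, 0 <= x -> psi x = phi x) by (intros; unfold psi; rewrite Rabs_pos_eq; auto).
  assert (Hder : forall c, 0 < c -> derivable_pt_lim psi c (d 1 c)).
  { intros c Hc eps Heps. destruct (d_deriv 0 c Hc eps Heps) as [del Hdel].
    assert (Hm : 0 < Rmin del c) by (apply Rmin_pos; [apply cond_pos | lra]).
    exists (mkposreal _ Hm). intros h Hh Hhm. simpl in Hhm.
    assert (Hh1 : Rabs h < del) by (eapply Rlt_le_trans; [exact Hhm | apply Rmin_l]).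
    assert (Hh2 : Rabs h < c) by (eapply Rlt_le_trans; [exact Hhm | apply Rmin_r]).
    apply Rabs_def2 in Hh2.
    rewrite !Hpsi, <- !d_phi by lra. apply Hdel; auto. }
  pose (pr1 c (P : u < c < v) := exist _ (d 1 c) (Hder c ltac:(lra)) : derivable_pt psi c).
  pose (pr2 c (_ : u < c < v) := derivable_pt_id c).
  destruct (MVT psi id u v pr1 pr2) as [c [Hc E]]; [lra | | |].
  - intros c Hc. destruct (Req_dec c 0) as [->|Hne].
    + intros eps Heps. destruct (phi_right_cont eps Heps) as [del [Hdel Hphi]].
      exists del; split; [lra|]. intros x [_ Hx]. simpl in *. unfold R_dist in *.
      unfold psi. rewrite Rabs_R0. apply Hphi. rewrite Rminus_0_r in Hx. split; [apply Rabs_pos | lra].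
    + apply derivable_continuous_pt. exists (d 1 c). apply Hder. lra.
  - intros c _. apply derivable_continuous_pt, derivable_pt_id.
  - exists c. split; [exact Hc|].
    rewrite (derive_pt_eq_0 _ _ _ (pr1 c Hc) (Hder c ltac:(lra))) in E.
    rewrite (derive_pt_eq_0 _ _ _ (pr2 c Hc) (derivable_pt_lim_id c)) in E.
    unfold id in E. rewrite <- !Hpsi by lra. lra.
Qed.

Lemma phi_antitone u v : 0 <= u <= v -> phi v <= phi u.
Proof.
  intros Huv. destruct (Req_dec u v) as [<-|Hne]; [lra|].
  destruct (mvt_phi u v) as [c [Hc E]]; [lra|].
  pose proof (d1_nonpos c ltac:(lra)). nra.
Qed.

(* Once phi' vanishes, phi is constant beyond that point; since phi tends to 0 this
   constant is 0. *)
Lemma phi_flat_vanish xi : 0 < xi -> d 1 xi = 0 -> forall y, xi <= y -> phi y = 0.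
Proof.
  intros Hxi Hd1.
  assert (Hconst : forall y, xi <= y -> phi y = phi xi).
  { intros y Hy. destruct (Req_dec xi y) as [<-|Hne]; [reflexivity|].
    destruct (mvt_phi xi y) as [c [Hc E]]; [lra|].
    pose proof (d1_monotone xi c ltac:(lra)). pose proof (d1_nonpos c ltac:(lra)).
    assert (d 1 c = 0) by lra. nra. }
  assert (Hxi0 : phi xi = 0).
  { destruct (Req_dec (phi xi) 0) as [|Hne]; [assumption|].
    destruct (phi_vanish (Rabs (phi xi))) as [M HM]; [apply Rabs_pos_lt; auto|].
    specialize (HM (Rmax M xi + 1)). rewrite Hconst in HM.
    - pose proof (Rmax_l M xi). lra.
    - pose proof (Rmax_r M xi). lra. }
  intros y Hy. rewrite Hconst; auto.
Qed.

(* If phi'' vanishes at eta then so does phi': phi'' is then 0 on [eta,oo), so phi' is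
   constant there, and a negative slope would eventually make phi negative. *)
Lemma d2_zero_d1_zero eta : 0 < eta -> d 2 eta = 0 -> d 1 eta = 0.
Proof.
  intros Heta Hd2.
  assert (Hd1 : forall y, eta <= y -> d 1 y = d 1 eta).
  { intros y Hy. destruct (Req_dec eta y) as [<-|Hne]; [reflexivity|].
    destruct (MVT_cor2 (d 1) (d 2) eta y) as [c [E Hc]];
      [lra | intros c Hc; apply d_deriv; lra |].
    pose proof (d2_antitone eta c ltac:(lra)). pose proof (d2_nonneg c ltac:(lra)).
    assert (d 2 c = 0) by lra. nra. }
  pose proof (d1_nonpos eta Heta) as Hk. set (k := d 1 eta) in *.
  destruct Hk as [Hk|]; [|assumption]. exfalso.
  pose proof (phi_nonneg eta ltac:(lra)).
  set (y := eta + (phi eta + 1) / (- k)).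
  assert (Hy : eta < y)
    by (unfold y; assert (0 < (phi eta + 1) / (- k)) by (apply Rdiv_lt_0_compat; lra); lra).
  destruct (mvt_phi eta y) as [c [Hc E]]; [lra|].
  rewrite Hd1 in E by lra.
  assert (E' : k * (y - eta) = - (phi eta + 1)) by (unfold y; field; lra).
  pose proof (phi_nonneg y ltac:(lra)). lra.
Qed.

Lemma d1_flat_zero c1 c2 : 0 < c1 < c2 -> d 1 c1 = d 1 c2 -> d 1 c2 = 0.
Proof.
  intros Hc E.
  destruct (MVT_cor2 (d 1) (d 2) c1 c2) as [eta [Emvt Heta]];
    [lra | intros c Hc'; apply d_deriv; lra |].
  assert (Hd2 : d 2 eta = 0) by nra.
  pose proof (d2_zero_d1_zero eta ltac:(lra) Hd2).
  pose proof (d1_monotone eta c2 ltac:(lra)). pose proof (d1_nonpos c2 ltac:(lra)). lra.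
Qed.

Lemma phi_strict_antitone u v : 0 <= u < v -> 0 < phi v -> phi v < phi u.
Proof.
  intros Huv Hv. destruct (mvt_phi u v Huv) as [c [Hc E]].
  pose proof (d1_nonpos c ltac:(lra)).
  destruct (Req_dec (d 1 c) 0) as [Z|Z].
  - rewrite (phi_flat_vanish c ltac:(lra) Z v) in Hv by lra. lra.
  - nra.
Qed.

Lemma phi_strict_convex u v l : 0 <= u < v -> 0 < l < 1 -> 0 < phi u ->
  phi (l * u + (1 - l) * v) < l * phi u + (1 - l) * phi v.
Proof.
  intros Huv Hl Hu. set (m := l * u + (1 - l) * v).
  assert (Hmu : m - u = (1 - l) * (v - u)) by (unfold m; ring).
  assert (Hvm : v - m = l * (v - u)) by (unfold m; ring).
  assert (u < m < v) by nra.
  destruct (mvt_phi u m) as [c1 [Hc1 E1]]; [lra|].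
  destruct (mvt_phi m v) as [c2 [Hc2 E2]]; [lra|].
  assert (Hslope : d 1 c1 < d 1 c2).
  { destruct (Req_dec (d 1 c1) (d 1 c2)) as [Eq|Ne].
    - pose proof (d1_flat_zero c1 c2 ltac:(lra) Eq) as Z.
      rewrite (phi_flat_vanish c1 ltac:(lra) ltac:(lra) m ltac:(lra)) in E1. nra.
    - pose proof (d1_monotone c1 c2 ltac:(lra)). lra. }
  assert (Hgap : l * phi u + (1 - l) * phi v - phi m =
                 l * (1 - l) * (v - u) * (d 1 c2 - d 1 c1)).
  { replace (l * phi u + (1 - l) * phi v - phi m)
      with (- l * (phi m - phi u) + (1 - l) * (phi v - phi m)) by ring.
    rewrite E1, E2, Hmu, Hvm. ring. }
  assert (0 < l * (1 - l) * (v - u) * (d 1 c2 - d 1 c1))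
    by (repeat apply Rmult_lt_0_compat; lra).
  lra.
Qed.

(* Strict superadditivity of 1 - phi: a consequence of convexity with phi 0 = 1. *)
Lemma phi_strict_superadditive x y : 0 < x -> 0 < y -> phi x + phi y < 1 + phi (x + y).
Proof.
  intros Hx Hy. set (v := x + y).
  assert (Cx : phi x < y / v * phi 0 + (1 - y / v) * phi v).
  { replace x with (y / v * 0 + (1 - y / v) * v) at 1 by (unfold v; field; lra).
    apply phi_strict_convex; [unfold v; lra | apply ratio_in_unit; unfold v; lra | lra]. }
  assert (Cy : phi y < x / v * phi 0 + (1 - x / v) * phi v).
  { replace y with (x / v * 0 + (1 - x / v) * v) at 1 by (unfold v; field; lra).
    apply phi_strict_convex; [unfold v; lra | apply ratio_in_unit; unfold v; lra | lra]. }
  replace (y / v) with (1 - x / v) in Cx by (unfold v; field; lra).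
  rewrite phi_0 in Cx, Cy. lra.
Qed.


Variable p : R.
Hypothesis p_range : 0 < p <= 1.

Lemma term_antitone_below A y y' : 0 <= A -> Rabs y' < Rabs y ->
  below (phi (A + abspow y p)) (phi (A + abspow y' p)).
Proof.
  intros HA Hy. pose proof (abspow_lt y' y p ltac:(lra) Hy). pose proof (abspow_nonneg y' p).
  split; [apply phi_antitone; lra | intros Hpos; apply phi_strict_antitone; [lra | exact Hpos]].
Qed.

(* One coordinate term at relative position s between the grid values: by concavity
   of t^p and convexity of phi it is at most the interpolation of the grid values. *)
Lemma term_convex_below A s C w : 0 <= A -> 0 < s < 1 -> 0 < C -> s * C <= w ->
  below (phi (A + w)) ((1 - s) * phi A + s * phi (A + C)).
Proof.
  intros HA Hs HC Hw.
  assert (Hmid : phi (A + w) <= phi (A + s * C)) by (apply phi_antitone; nra).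
  assert (Hleft : phi (A + s * C) <= phi A) by (apply phi_antitone; nra).
  pose proof (phi_nonneg A HA). pose proof (phi_nonneg (A + C) ltac:(lra)).
  destruct (Rle_lt_dec (phi (A + w)) 0) as [Hz|Hpos]; [split; [nra | lra]|].
  assert (Hcvx : phi (A + s * C) < (1 - s) * phi A + (1 - (1 - s)) * phi (A + C)).
  { replace (A + s * C) with ((1 - s) * A + (1 - (1 - s)) * (A + C)) by ring.
    apply phi_strict_convex; lra. }
  split; intros; lra.
Qed.

(* The two correlations of a point, as a function of its coordinate x alone, when the
   other coordinates contribute A1 and A2 to the distances to t1 and t2, whose
   coordinates are a and b. *)
Definition coord_sum (A1 A2 a b x : R) : R :=
  phi (A1 + abspow (x - a) p) + phi (A2 + abspow (x - b) p).

Lemma coord_sum_sym A1 A2 a b x : coord_sum A1 A2 a b x = coord_sum A2 A1 b a x.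
Proof. unfold coord_sum. ring. Qed.

Lemma phi_shift_nonneg A y : 0 <= A -> 0 <= phi (A + abspow y p).
Proof. intros HA. apply phi_nonneg. pose proof (abspow_nonneg y p). lra. Qed.

Lemma coord_outside A1 A2 a b x e : 0 <= A1 -> 0 <= A2 ->
  Rabs (e - a) < Rabs (x - a) -> Rabs (e - b) < Rabs (x - b) ->
  below (coord_sum A1 A2 a b x) (coord_sum A1 A2 a b e).
Proof.
  intros HA1 HA2 Ha Hb. apply below_add; try (apply phi_shift_nonneg; assumption);
    apply term_antitone_below; assumption.
Qed.

Lemma coord_between A1 A2 a b x : 0 <= A1 -> 0 <= A2 -> a < x < b ->
  let s := (x - a) / (b - a) in
  below (coord_sum A1 A2 a b x) ((1 - s) * coord_sum A1 A2 a b a + s * coord_sum A1 A2 a b b).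
Proof.
  intros HA1 HA2 Hx s.
  assert (Hs : 0 < s < 1) by (apply ratio_in_unit; lra).
  set (C := abspow (b - a) p).
  assert (HC : 0 < C) by (apply abspow_pos; lra).
  assert (T1 : below (phi (A1 + abspow (x - a) p)) ((1 - s) * phi A1 + s * phi (A1 + C))).
  { apply term_convex_below; try lra.
    replace (x - a) with (s * (b - a)) by (unfold s; field; lra). apply abspow_scale; lra. }
  assert (T2 : below (phi (A2 + abspow (x - b) p))
                     ((1 - (1 - s)) * phi A2 + (1 - s) * phi (A2 + C))).
  { apply term_convex_below; try lra.
    replace (x - b) with ((1 - s) * (a - b)) by (unfold s; field; lra).
    unfold C. rewrite abspow_sym. apply abspow_scale; lra. }
  destruct (below_add _ _ _ _ (phi_shift_nonneg _ _ HA1) (phi_shift_nonneg _ _ HA2) T1 T2)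
    as [L S].
  unfold coord_sum. rewrite !Rminus_diag, !abspow_0, !Rplus_0_r, (abspow_sym a b). fold C.
  split; [lra | intros Hpos; specialize (S Hpos); lra].
Qed.

Lemma coord_bound_ordered A1 A2 a b x B : 0 <= A1 -> 0 <= A2 -> a <= b -> x <> a -> x <> b ->
  0 < B -> coord_sum A1 A2 a b a <= B -> coord_sum A1 A2 a b b <= B ->
  coord_sum A1 A2 a b x < B.
Proof.
  intros HA1 HA2 Hab Ha Hb HB Hva Hvb.
  destruct (Rlt_or_le x a) as [Hxa|Hxa]; [|destruct (Rlt_or_le x b) as [Hxb|Hxb]].
  - apply (below_lt _ _ B (coord_outside A1 A2 a b x a HA1 HA2 ltac:(rewrite Rminus_diag, Rabs_R0;
      apply Rabs_pos_lt; lra) ltac:(rewrite !Rabs_left1 by lra; lra)) Hva HB).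
  - destruct (coord_between A1 A2 a b x HA1 HA2 ltac:(lra)) as [L S].
    set (s := (x - a) / (b - a)) in *.
    assert (Hs : 0 < s < 1) by (apply ratio_in_unit; lra).
    apply (below_lt _ _ B (conj L S)); [nra | exact HB].
  - apply (below_lt _ _ B (coord_outside A1 A2 a b x b HA1 HA2 ltac:(rewrite !Rabs_right by lra; lra)
      ltac:(rewrite Rminus_diag, Rabs_R0; apply Rabs_pos_lt; lra)) Hvb HB).
Qed.

Lemma coord_bound A1 A2 a b x B : 0 <= A1 -> 0 <= A2 -> x <> a -> x <> b -> 0 < B ->
  coord_sum A1 A2 a b a <= B -> coord_sum A1 A2 a b b <= B -> coord_sum A1 A2 a b x < B.
Proof.
  intros HA1 HA2 Ha Hb HB Hva Hvb. destruct (Rle_or_lt a b) as [Hab|Hab].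
  - apply coord_bound_ordered; assumption.
  - rewrite coord_sum_sym in *. apply coord_bound_ordered; auto; lra.
Qed.

Definition corr_sum {D : nat} (t1 t2 th : vecR D) : R := phi (lpp p th t1) + phi (lpp p th t2).

Lemma corr_sum_upd {D : nat} (t1 t2 th : vecR D) i v :
  corr_sum t1 t2 (upd th i v) =
  coord_sum (lpp p (upd th i (t1 i)) t1) (lpp p (upd th i (t2 i)) t2) (t1 i) (t2 i) v.
Proof. unfold corr_sum, coord_sum. rewrite (lpp_upd p th t1 i v), (lpp_upd p th t2 i v). reflexivity. Qed.

Lemma corr_sum_support {D : nat} (t1 t2 th : vecR D) : th = t1 \/ th = t2 ->
  corr_sum t1 t2 th = 1 + phi (lpp p t1 t2).
Proof.
  unfold corr_sum. intros [-> | ->]; rewrite lpp_self, phi_0; [|rewrite lpp_sym]; ring.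
Qed.

(* The sum bound, assumed on the grid Cart({t1, t2}), extends to every point off the
   support: induction on the number of off-grid coordinates, moving one of them to
   either grid value and invoking the one-dimensional bound. *)
Lemma corr_sum_off_support {D : nat} (t1 t2 : vecR D) :
  (forall t, in_Cart2 t1 t2 t -> t <> t1 -> t <> t2 -> corr_sum t1 t2 t < 1 + phi (lpp p t1 t2)) ->
  forall th, th <> t1 -> th <> t2 -> corr_sum t1 t2 th < 1 + phi (lpp p t1 t2).
Proof.
  intros Hcart. set (g := phi (lpp p t1 t2)).
  assert (Hg : 0 <= g) by (apply phi_nonneg, lpp_nonneg).
  assert (Hind : forall n th, grid_defect t1 t2 th <= INR n -> th <> t1 -> th <> t2 ->
                   corr_sum t1 t2 th < 1 + g).
  { induction n as [|n IH]; intros th Hdef H1 H2;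
      (destruct (cart_or_off_grid t1 t2 th) as [Hc | [i [Hi1 Hi2]]]; [apply Hcart; assumption|]).
    - pose proof (grid_defect_pos t1 t2 th i Hi1 Hi2). simpl in Hdef. lra.
    - assert (Hnb : forall v, v = t1 i \/ v = t2 i -> corr_sum t1 t2 (upd th i v) <= 1 + g).
      { intros v Hv. destruct (classic (upd th i v = t1 \/ upd th i v = t2)) as [Hs|Hs].
        - rewrite corr_sum_support by exact Hs. unfold g. lra.
        - left. apply IH; [|tauto|tauto].
          rewrite grid_defect_upd by assumption. rewrite S_INR in Hdef. lra. }
      replace (corr_sum t1 t2 th) with (corr_sum t1 t2 (upd th i (th i)))
        by (unfold corr_sum; rewrite !lpp_upd_self; reflexivity).
      rewrite corr_sum_upd. apply coord_bound; try (apply lpp_nonneg || assumption || lra);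
        rewrite <- corr_sum_upd; apply Hnb; auto. }
  intros th H1 H2. apply (Hind D); [apply grid_defect_bound | assumption | assumption].
Qed.

(* The difference bound holds at every point other than t1, by strict superadditivity
   of 1 - phi and the triangle inequality for ||.||_p^p. *)
Lemma corr_diff_bound {D : nat} (t1 t2 th : vecR D) : t1 <> t2 -> th <> t1 ->
  phi (lpp p th t1) - phi (lpp p th t2) < 1 - phi (lpp p t1 t2).
Proof.
  intros H12 H1.
  pose proof (phi_strict_superadditive (lpp p th t1) (lpp p t1 t2) (lpp_pos p _ _ H1)
                (lpp_pos p _ _ H12)).
  assert (phi (lpp p th t1 + lpp p t1 t2) <= phi (lpp p th t2))
    by (apply phi_antitone; split; [apply lpp_nonneg | apply lpp_triangle, p_range]).
  lra.
Qed.

(* g = kappa(t1, t2) lies in [0, 1) for t1 <> t2, phi being strictly decreasing where positive. *)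
Lemma kernel_offdiag_range {D : nat} (t1 t2 : vecR D) : t1 <> t2 -> 0 <= phi (lpp p t1 t2) < 1.
Proof.
  intros H12. pose proof (lpp_pos p t1 t2 H12). split; [apply phi_nonneg; lra|].
  destruct (phi_nonneg (lpp p t1 t2) ltac:(lra)) as [Hpos|Hz]; [|lra].
  rewrite <- phi_0. apply phi_strict_antitone; lra.
Qed.

Lemma erc_off_support {D : nat} (t1 t2 : vecR D) : t1 <> t2 ->
  (forall t, in_Cart2 t1 t2 t -> t <> t1 -> t <> t2 ->
     erc2 (phi (lpp p t1 t2)) (phi (lpp p t t1)) (phi (lpp p t t2))) ->
  forall t, t <> t1 -> t <> t2 -> erc2 (phi (lpp p t1 t2)) (phi (lpp p t t1)) (phi (lpp p t t2)).
Proof.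
  intros H12 Hcart t H1 H2. pose proof (kernel_offdiag_range t1 t2 H12) as Hg.
  pose proof (phi_nonneg (lpp p t t1) (lpp_nonneg _ _ _)).
  pose proof (phi_nonneg (lpp p t t2) (lpp_nonneg _ _ _)).
  apply erc2_iff; [lra|]. split.
  - rewrite Rabs_pos_eq by lra. apply (corr_sum_off_support t1 t2); [|assumption|assumption].
    intros t' Hc H1' H2'. pose proof (Hcart t' Hc H1' H2') as Herc.
    apply erc2_iff in Herc; [|lra]. destruct Herc as [Hsum _].
    eapply Rle_lt_trans; [apply Rle_abs | exact Hsum].
  - pose proof (corr_diff_bound t1 t2 t H12 H1).
    pose proof (corr_diff_bound t2 t1 t (not_eq_sym H12) H2) as Hdiff.
    rewrite (lpp_sym p t2 t1) in Hdiff.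
    apply Rabs_def1; lra.
Qed.

End CompletelyMonotone.

Section InnerProduct.

Variable H : RHilbert.

Lemma hinner_zero_r (z : H) : hinner z hzero = 0.
Proof.
  pose proof (hinner_addl H hzero hzero z) as E. rewrite hadd0 in E.
  rewrite hinner_sym. lra.
Qed.

Lemma hinner_add_r (z u v : H) : hinner z (hadd u v) = hinner z u + hinner z v.
Proof. rewrite hinner_sym, hinner_addl, (hinner_sym H u), (hinner_sym H v). reflexivity. Qed.

Lemma hinner_scal_r c (z u : H) : hinner z (hscal c u) = c * hinner z u.
Proof. rewrite hinner_sym, hinner_scall, (hinner_sym H u). reflexivity. Qed.

Lemma hinner_sub_r (z y v : H) : hinner z (hsub y v) = hinner z y - hinner z v.
Proof.
  pose proof (hinner_add_r z v (hopp v)) as E. rewrite haddN, hinner_zero_r in E.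
  unfold hsub. rewrite hinner_add_r. lra.
Qed.

Definition acts_as_comb (u w r : H) (al be : R) : Prop :=
  forall z, hinner z r = al * hinner z u + be * hinner z w.

Lemma comb_acts_as_comb (u w : H) c1 c2 : acts_as_comb u w (hadd (hscal c1 u) (hscal c2 w)) c1 c2.
Proof. intros z. rewrite hinner_add_r, !hinner_scal_r. reflexivity. Qed.

Lemma span_acts_as_comb (u w : H) M v : in_span M v -> (forall x, In x M -> x = u \/ x = w) ->
  exists al be, acts_as_comb u w v al be.
Proof.
  induction 1 as [|M v x c Hspan IH]; intros HM.
  - exists 0, 0. intros z. rewrite hinner_zero_r. ring.
  - destruct IH as [al [be Hv]]; [intros y Hy; apply HM; right; exact Hy|].
    destruct (HM x (or_introl eq_refl)) as [-> | ->];
      [exists (al + c), be | exists al, (be + c)];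
      intros z; rewrite hinner_add_r, hinner_scal_r, Hv; ring.
Qed.

Lemma acts_as_comb_sub (u w y v : H) c1 c2 al be :
  acts_as_comb u w y c1 c2 -> acts_as_comb u w v al be ->
  acts_as_comb u w (hsub y v) (c1 - al) (c2 - be).
Proof. intros Hy Hv z. rewrite hinner_sub_r, Hy, Hv. ring. Qed.

Lemma acts_as_comb_zero (u w r : H) al be : acts_as_comb u w r al be ->
  hinner u r = 0 -> hinner w r = 0 -> r = hzero.
Proof.
  intros Hr Hu Hw. apply hinner_def. rewrite Hr, (hinner_sym H r u), (hinner_sym H r w), Hu, Hw.
  ring.
Qed.

(* Two unit vectors with |<u, w>| < 1 are linearly independent: if c1 u + c2 w lies in the
   span of copies of w, then c1 = 0. *)
Lemma comb_in_line_coeff (u w y v : H) g c1 c2 M :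
  hinner u u = 1 -> hinner w w = 1 -> hinner u w = g -> -1 < g < 1 ->
  acts_as_comb u w y c1 c2 -> in_span M v -> (forall x, In x M -> x = w) ->
  (forall z, hinner z y = hinner z v) -> c1 = 0.
Proof.
  intros Hu Hw Huw Hg Hy Hv HM Hyv.
  destruct (span_acts_as_comb w w M v Hv) as [al [be Hv']];
    [intros x Hx; left; apply HM, Hx|].
  pose proof (Hyv u) as Eu. pose proof (Hyv w) as Ew.
  rewrite Hy, Hv' in Eu, Ew. rewrite (hinner_sym H w u) in Ew.
  rewrite Hu, Huw in Eu. rewrite Hw, Huw in Ew.
  assert (Hprod : c1 * (1 - g * g) = 0) by nra.
  apply Rmult_integral in Hprod. destruct Hprod; [assumption | nra].
Qed.

End InnerProduct.

Section TwoSparseOMP.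

Variables (D : nat) (H : RHilbert) (a : vecR D -> H) (t1 t2 : vecR D) (g : R).
Hypothesis unit1 : hinner (a t1) (a t1) = 1.
Hypothesis unit2 : hinner (a t2) (a t2) = 1.
Hypothesis cross : hinner (a t1) (a t2) = g.
Hypothesis g_range : -1 < g < 1.
Hypothesis erc : forall t, t <> t1 -> t <> t2 ->
  erc2 g (hinner (a t) (a t1)) (hinner (a t) (a t2)).

(* A nonzero residual in span{a t1, a t2} is maximally correlated only with a support atom:
   for any other atom the ERC and Hoelder's inequality give a strictly smaller correlation. *)
Lemma argmax_in_support r al be t : acts_as_comb H (a t1) (a t2) r al be -> r <> hzero ->
  is_argmax a r t -> t = t1 \/ t = t2.
Proof.
  intros Hr Hr0 Harg. apply NNPP. intros Hout.
  destruct (erc2_weights g _ _ g_range (erc t ltac:(tauto) ltac:(tauto))) as [u [v [Huv Hw]]].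
  assert (C1 : hinner (a t1) r = al + be * g) by (rewrite Hr, unit1, cross; ring).
  assert (C2 : hinner (a t2) r = al * g + be)
    by (rewrite Hr, (hinner_sym H (a t2) (a t1)), cross, unit2; ring).
  assert (Ct : hinner (a t) r = u * (al + be * g) + v * (al * g + be)) by (rewrite Hr; apply Hw).
  pose proof (Harg t1) as A1. pose proof (Harg t2) as A2.
  rewrite C1, Ct in A1. rewrite C2, Ct in A2.
  destruct (hoelder_dominance u v _ _ Huv A1 A2) as [Z1 Z2].
  apply Hr0, (acts_as_comb_zero H _ _ r al be Hr); [rewrite C1 | rewrite C2]; assumption.
Qed.

(* Every atom OMP selects on an input in span{a t1, a t2} is a support atom: by induction
   on the run, each residual stays in that span. *)
Lemma omp_path_in_support y c1 c2 L : acts_as_comb H (a t1) (a t2) y c1 c2 ->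
  omp_path a y L -> forall t, In t L -> t = t1 \/ t = t2.
Proof.
  intros Hy Hpath. induction Hpath as [|L r t Hpath IH [[v [Hv ->]] _] Hr0 Harg];
    [intros t0 []|].
  intros t0 Ht0. apply in_app_or in Ht0. destruct Ht0 as [Ht0 | [<- | []]]; [apply IH, Ht0|].
  destruct (span_acts_as_comb H (a t1) (a t2) _ v Hv) as [al [be Hv']].
  { intros x Hx. apply in_map_iff in Hx. destruct Hx as [t' [<- Ht']].
    destruct (IH t' Ht') as [-> | ->]; auto. }
  exact (argmax_in_support _ _ _ t (acts_as_comb_sub H _ _ _ _ _ _ _ _ Hy Hv') Hr0 Harg).
Qed.

(* Exact recovery: the selected atoms are support atoms, and OMP can only stop once both
   have been selected, since neither atom alone spans the input. *)
Lemma omp_two_sparse_recovery : exact_2step_recovery a t1 t2.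
Proof.
  intros c1 c2 Hc1 Hc2 L [Hpath [[v [Hv Hzero]] _]].
  set (y := hadd (hscal c1 (a t1)) (hscal c2 (a t2))) in *.
  pose proof (comb_acts_as_comb H (a t1) (a t2) c1 c2) as Hy. fold y in Hy.
  assert (Hyv : forall z, hinner z y = hinner z v).
  { intros z. pose proof (hinner_sub_r H z y v) as E. rewrite <- Hzero, hinner_zero_r in E. lra. }
  pose proof (omp_path_in_support _ _ _ L Hy Hpath) as Hsupp.
  assert (Hin1 : In t1 L).
  { apply NNPP. intros Hnot. apply Hc1.
    apply (comb_in_line_coeff H (a t1) (a t2) y v g c1 c2 (map a L)); auto.
    intros x Hx. apply in_map_iff in Hx. destruct Hx as [t' [<- Ht']].
    destruct (Hsupp t' Ht') as [-> | ->]; [contradiction | reflexivity]. }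
  assert (Hin2 : In t2 L).
  { apply NNPP. intros Hnot. apply Hc2.
    apply (comb_in_line_coeff H (a t2) (a t1) y v g c2 c1 (map a L));
      [auto | auto | rewrite hinner_sym; auto | auto | intros z; rewrite Hy; ring | auto | | auto].
    intros x Hx. apply in_map_iff in Hx. destruct Hx as [t' [<- Ht']].
    destruct (Hsupp t' Ht') as [-> | ->]; [reflexivity | contradiction]. }
  intros t. split; [apply Hsupp | intros [-> | ->]; assumption].
Qed.

End TwoSparseOMP.

Theorem mainTheorem14 (D : nat) (H : RHilbert) (a : vecR D -> H)
  (phi : R -> R) (p : R) (t1 t2 : vecR D) :
  (1 <= D)%nat ->
  CMF_dictionary a phi p ->
  t1 <> t2 ->
  (forall t : vecR D, in_Cart2 t1 t2 t -> t <> t1 -> t <> t2 ->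
     let G : mat2 := ((kernel phi p t1 t1, kernel phi p t1 t2),
                      (kernel phi p t2 t1, kernel phi p t2 t2)) in
     let g : R * R := (kernel phi p t t1, kernel phi p t t2) in
     norm1_2 (mulv2 (inv2 G) g) < 1) ->
  exact_2step_recovery a t1 t2.
Proof.
  intros _ [[Hrc [d [Hd0 [Hder Hsign]]]] [H0 [Hlim [Hp Hker]]]] H12 Hcart.
  unfold kernel in *.
  pose proof (kernel_offdiag_range phi d Hrc Hd0 Hder Hsign H0 Hlim p t1 t2 H12) as Hg.
  apply (omp_two_sparse_recovery D H a t1 t2 (phi (lpp p t1 t2)));
    [rewrite Hker, lpp_self; exact H0 | rewrite Hker, lpp_self; exact H0 | apply Hker | lra |].
  intros t Ht1 Ht2. rewrite !Hker.
  apply (erc_off_support phi d Hrc Hd0 Hder Hsign H0 Hlim p Hp t1 t2 H12); [|assumption..].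
  intros t' Hc Ht1' Ht2'. specialize (Hcart t' Hc Ht1' Ht2'). cbv zeta in Hcart.
  rewrite !lpp_self, H0, (lpp_sym p t2 t1) in Hcart. exact Hcart.
Qed.
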